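(* $\mathrm{GL}_6(\mathbb{F}_2)$ does not contain a subgroup isomorphic to $\mathrm{PSL}_2(\mathbb{F}_8)\times C_2$. *)

From mathcomp Require Import all_boot all_algebra all_fingroup all_solvable all_field.
Set Implicit Arguments. Unset Strict Implicit. Unset Printing Implicit Defensive.
Import GRing.Theory.
Local Open Scope ring_scope.
Local Open Scope group_scope.

Definition SL2 (F : finFieldType) : {set {'GL_2[F]}} :=
  [set g : {'GL_2[F]} | \det (GLval g) == 1%R].

Definition PSL2 (F : finFieldType) := (SL2 F / 'Z(SL2 F))%g.

From mathcomp Require Import all_boot all_algebra all_fingroup all_solvable all_field.
From mathcomp Require Import all_character ring zify.
Set Implicit Arguments. Unset Strict Implicit. Unset Printing Implicit Defensive.
Import GRing.Theory.

(* PSL_2(F_8) has an element of order 9: the image of the companion matrix of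
   X^2 - tX + 1 for a root t of t^3 - 3t + 1, the minimal polynomial of
   2 cos(2 pi / 9).  So it suffices that an element x of order 9 and an
   involution y never commute in GL_6(F_2).  The group <x> acts freely on the
   vectors not fixed by x^3, hence 9 divides the number of such vectors in any
   x-stable set.  On all of F_2^6 this reads 9 | 2^6 - 2^r, r < 6 being the
   dimension of the fixed space of x^3, which forces r = 0.  The fixed space of
   y is x-stable, and its dimension s satisfies 0 < s < 6 because
   (y - 1)^2 = 0; now 9 | 2^s - 1 is impossible. *)

Section CyclicPGroups.

Local Open Scope group_scope.

Variable gT : finGroupType.

Lemma order_pfactor (x : gT) p k : prime p ->
  x ^+ (p ^ k.+1) = 1 -> x ^+ (p ^ k) != 1 -> #[x] = (p ^ k.+1)%N.
Proof.
move=> p_pr /eqP; rewrite -!order_dvdn => /(dvdn_pfactor _ _ p_pr)[j le_jk ->].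
rewrite dvdn_Pexp2l ?prime_gt1 // -ltnNge => lt_kj.
by rewrite (@anti_leq j k.+1) ?le_jk.
Qed.

Lemma mem_nt_sub_cycle_pfactor (x : gT) p k (K : {group gT}) :
  prime p -> #[x] = (p ^ k.+1)%N -> K \subset <[x]> -> K :!=: 1 -> x ^+ (p ^ k) \in K.
Proof.
move=> p_pr ox sKx ntK.
have pK : p.-group K by apply: pgroupS sKx _; rewrite /pgroup -orderE ox pnatX pnat_id.
have [_ p_dv_K _] := pgroup_pdiv pK ntK.
have [y Ky oy] := Cauchy p_pr p_dv_K.
have : <[y]>%G \in [set H : {group gT} | H \subset <[x]> & #|H| == p].
  by rewrite inE -orderE oy eqxx andbT cycle_subG (subsetP sKx).
rewrite cycle_sub_group; last by rewrite ox dvdn_exp.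
rewrite ox expnS mulKn ?prime_gt0 // => /set1P/(congr1 val)/= yx.
by apply: subsetP (cycle_id _); rewrite -yx cycle_subG.
Qed.

End CyclicPGroups.

Section CyclicActions.

Local Open Scope group_scope.

Variables (aT : finGroupType) (D : {group aT}) (rT : finType).
Variable to : action D rT.

Lemma acts_cycle_afix1 x a :
  x \in D -> a \in D -> commute x a -> [acts <[x]>, on 'Fix_to[a] | to].
Proof.
move=> Dx Da cxa; have := acts_subnorm_fix to [set a].
rewrite [D :&: [set a]](setIidPr _) ?sub1set // => /(subset_trans _); apply.
by rewrite cycle_subG inE Dx; apply/cent1P.
Qed.

Lemma dvdn_card_setD_afix p k x (S : {set rT}) :
    prime p -> x \in D -> #[x] = (p ^ k.+1)%N -> [acts <[x]>, on S | to] ->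
  (p ^ k.+1 %| #|S :\: 'Fix_to[x ^+ (p ^ k)]|)%N.
Proof.
move=> p_pr Dx ox actsS.
have actsSF : [acts <[x]>, on S :\: 'Fix_to[x ^+ (p ^ k)] | to].
  by apply: actsD => //; apply: acts_cycle_afix1; rewrite ?groupX //; apply: commuteX.
rewrite -(acts_sum_card_orbit actsSF); apply: dvdn_sum => _ /imsetP[v /setDP[_ nfix_v] ->].
have regular_v : 'C_<[x]>[v | to] = 1.
  apply/eqP; apply: contraR nfix_v => ntC.
  have := mem_nt_sub_cycle_pfactor p_pr ox (subsetIl _ _) ntC.
  by rewrite !(inE, sub1set) => /and3P[].
by rewrite (card_orbit_in to v) ?cycle_subG // regular_v indexg1 -orderE ox.
Qed.

End CyclicActions.

Lemma exp2_subn_ndvd9 a b : (b < a < b + 6)%N -> ~~ (9 %| 2 ^ a - 2 ^ b)%N.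
Proof.
case/andP => lt_ba; rewrite -(subnKC (ltnW lt_ba)) ltn_add2l expnD.
rewrite -{2}[(2 ^ b)%N]muln1 -mulnBr Gauss_dvdr ?coprimeXr // -subn_gt0 in lt_ba *.
by move: (a - b) lt_ba => [|[|[|[|[|[|d]]]]]].
Qed.

Lemma GL_expE (R : finComUnitRingType) n (g : {'GL_n[R]}) k :
  GLval (g ^+ k)%g = (GLval g ^+ k)%R.
Proof. by elim: k => [|k IHk]; rewrite ?expg0 ?expr0 // expgS exprS GL_ME IHk. Qed.

Section GLFixedSpaces.

Local Open Scope group_scope.
Local Open Scope ring_scope.

Variables (F : finFieldType) (n' : nat).
Local Notation n := n'.+1.
Local Notation GLact := (mx_repr_action (GLrepr F n')).

Lemma afix_GL (g : {'GL_n[F]}) : 'Fix_GLact[g] = rowg (kermx (GLval g - 1)).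
Proof.
apply/setP => v; rewrite mem_rowg sub_kermx mulmxBr mulmx1 subr_eq0.
by apply/afix1P/eqP; rewrite /= mx_repr_actE ?inE.
Qed.

Lemma rank_kermx_ltn (A : 'M[F]_n) : (\rank (kermx A) < n)%N = (A != 0).
Proof. by rewrite mxrank_ker ltn_subrL andbT lt0n mxrank_eq0. Qed.

Lemma rank_kermx_gt0_sqr0 (A : 'M[F]_n) : A *m A = 0 -> (0 < \rank (kermx A))%N.
Proof.
move/mulmx0_rank_max; rewrite mxrank_ker subn_gt0.
by have := rank_leq_row A; lia.
Qed.

Lemma GL_involution_sub1_sqr0 (y : {'GL_n[F]}) :
  2%N \in [pchar F] -> (y ^+ 2)%g = 1%g -> (GLval y - 1) *m (GLval y - 1) = 0.
Proof.
move=> pchar2 y2; rewrite mulmxE -expr2 sqrrB1 -GL_expE y2 GL_1E.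
rewrite -scaler_nat (pcharf0 pchar2) scale0r subr0.
by rewrite -mulr2n -scaler_nat (pcharf0 pchar2) scale0r.
Qed.

End GLFixedSpaces.

Section GL6F2.

Local Open Scope group_scope.

Lemma GL6_F2_order9_not_commute_involution (x y : {'GL_6['F_2]}) :
  #[x]%g = 9%N -> #[y]%g = 2%N -> ~ commute x y.
Proof.
move=> ox oy cxy; pose to := mx_repr_action (GLrepr 'F_2 5).
have GL_mem (g : {'GL_6['F_2]}) : g \in 'GL_6['F_2] by rewrite inE.
have dvd9 S : [acts <[x]>, on S | to] -> (9 %| #|S :\: 'Fix_to[x ^+ 3]|)%N.
  exact: (@dvdn_card_setD_afix _ _ _ to 3 1).
have fix_x3 : 'Fix_to[x ^+ 3] = 1%g.
  rewrite afix_GL; set r := \rank (kermx (GLval (x ^+ 3) - 1)%R).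
  have r_lt6 : (r < 6)%N.
    rewrite rank_kermx_ltn subr_eq0 -GL_1E val_eqE.
    by apply: contraTneq isT => x3; have := order_dvdn x 3; rewrite x3 eqxx ox.
  have actsT : [acts <[x]>, on setT | to].
    by apply/subsetP => g _; rewrite !inE /=; apply/subsetP => v; rewrite !inE.
  have := dvd9 _ actsT; rewrite setTD cardsCs setCK card_mx card_Fp //.
  rewrite afix_GL card_rowg card_Fp // -/r => dvd9_r.
  have /eqP : r = 0%N.
    apply/eqP; rewrite -leqn0 leqNgt; apply: contraL dvd9_r => r_gt0.
    by apply: exp2_subn_ndvd9; lia.
  by rewrite mxrank_eq0 => /eqP ->; rewrite rowg0.
have s_gt0 : (0 < \rank (kermx (GLval y - 1)%R))%N.
  apply/rank_kermx_gt0_sqr0/GL_involution_sub1_sqr0; first exact: pchar_Fp.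
  by rewrite -(expg_order y) oy.
have s_lt6 : (\rank (kermx (GLval y - 1)%R) < 6)%N.
  by rewrite rank_kermx_ltn subr_eq0 -GL_1E val_eqE -order_eq1 oy.
have := dvd9 _ (acts_cycle_afix1 to (GL_mem x) (GL_mem y) cxy).
rewrite fix_x3 afix_GL cardsD (setIidPr (sub1G _)) cards1 card_rowg card_Fp //.
by rewrite -[X in (_ - X)%N](expn0 2); apply/negP/exp2_subn_ndvd9; rewrite s_gt0 s_lt6.
Qed.

End GL6F2.

Section TwoByTwo.

Local Open Scope ring_scope.

Variable R : comNzRingType.

Definition mx2 (a b c d : R) : 'M[R]_2 :=
  \matrix_(i < 2, j < 2) if i == 0 :> nat then (if j == 0 :> nat then a else b)
                         else (if j == 0 :> nat then c else d).

Lemma mx2_mul a b c d a' b' c' d' :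
  mx2 a b c d *m mx2 a' b' c' d' =
  mx2 (a * a' + b * c') (a * b' + b * d') (c * a' + d * c') (c * b' + d * d').
Proof.
apply/matrixP => i j; rewrite !mxE !big_ord_recr big_ord0 /= !mxE /= add0r.
by case: i => [[|[|i]] Hi] //=; case: j => [[|[|j]] Hj].
Qed.

Lemma mx2_1 : mx2 1 0 0 1 = 1 :> 'M[R]_2.
Proof.
apply/matrixP => i j; rewrite !mxE.
by case: i => [[|[|i]] Hi] //=; case: j => [[|[|j]] Hj].
Qed.

Lemma det_mx2 a b c d : \det (mx2 a b c d) = a * d - b * c.
Proof.
rewrite (expand_det_row _ 0) !big_ord_recr big_ord0 /= add0r /cofactor.
by rewrite !det_mx11 !mxE /= expr0 expr1 mul1r mulN1r mulrN mulrC [b * c]mulrC.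
Qed.

End TwoByTwo.

Section CompanionOrder9.

Local Open Scope ring_scope.

Variables (R : comNzRingType) (t : R).
Hypothesis t_root : t ^+ 3 - 3%:R * t + 1 = 0.

Let t3 : t ^+ 3 = 3%:R * t - 1.
Proof. by rewrite -[RHS]add0r -t_root; ring. Qed.

Let M := mx2 0 (-1) 1 t.

Lemma companion_expr3 : M ^+ 3 = mx2 (- t) (1 - t ^+ 2) (t ^+ 2 - 1) (t - 1).
Proof. by rewrite !exprS expr0 mulr1 -!mulmxE !mx2_mul; congr mx2; ring: t3. Qed.

Lemma companion_expr9 : M ^+ 9 = 1.
Proof.
have M6 : M ^+ 6 = mx2 (t - 1) (t ^+ 2 - 1) (1 - t ^+ 2) (- t).
  by rewrite -[6%N]/(3 + 3)%N exprD companion_expr3 -mulmxE mx2_mul; congr mx2; ring: t3.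
by rewrite -[9%N]/(6 + 3)%N exprD M6 companion_expr3 -mulmxE mx2_mul -mx2_1; congr mx2; ring: t3.
Qed.

Lemma companion_expr3_not_commute :
  3%:R != 0 :> R -> M ^+ 3 * mx2 1 1 0 1 != mx2 1 1 0 1 * M ^+ 3.
Proof.
move=> three_neq0; apply: contraNneq three_neq0.
rewrite companion_expr3 -!mulmxE !mx2_mul => /matrixP/(_ 0 0); rewrite !mxE /=.
rewrite mulr1 mulr0 addr0 !mul1r => /eqP; rewrite -subr_eq0 opprD addrA subrr add0r oppr_eq0.
move/eqP => t2_1; apply/eqP.
have -> : 3%:R = (2%:R * t - 1) * (2%:R * t + 1) - 4%:R * (t ^+ 2 - 1) :> R by ring.
have -> : 2%:R * t - 1 = t * (t ^+ 2 - 1) - (t ^+ 3 - 3%:R * t + 1) by ring.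
by rewrite t_root t2_1 !(mulr0, subr0, mul0r).
Qed.

End CompanionOrder9.

Section F8.

Local Open Scope ring_scope.

Variable F : finFieldType.
Hypothesis hF : #|F| = 8%N.

Lemma pchar2_F8 : 2%N \in [pchar F].
Proof. exact: (@card_finPcharP _ 2 3). Qed.

Lemma F8_cubic_root : exists t : F, t ^+ 3 - 3%:R * t + 1 = 0.
Proof.
have /subsetPn[t _] : ~~ ([set: F] \subset [set 0; 1]).
  by apply/negP => /subset_leq_card; rewrite cardsT hF cards2; case: (_ != _).
rewrite !inE negb_or => /andP[t0 t1].
have t7 : t ^+ 7 = 1.
  by apply: (mulfI t0); rewrite -exprS mulr1 -hF expf_card.
have : (t - 1) * (t ^+ 3 - 3%:R * t + 1) * (t ^+ 3 - 3%:R * t ^+ 2 + 1) = 0.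
  (* Over F_2 the three factors are those of X^7 - 1. *)
  have -> : (t - 1) * (t ^+ 3 - 3%:R * t + 1) * (t ^+ 3 - 3%:R * t ^+ 2 + 1) =
    t ^+ 7 - 1 + 2%:R * (2%:R * t - 7%:R * t ^+ 3 + 7%:R * t ^+ 4 - 2%:R * t ^+ 6) by ring.
  by rewrite t7 subrr (pcharf0 pchar2_F8) mul0r addr0.
move/eqP; rewrite !mulf_eq0 subr_eq0 (negbTE t1) /=.
case/orP => [/eqP | /eqP t_inv_root]; first by exists t.
exists t^-1; have -> : t^-1 ^+ 3 - 3%:R * t^-1 + 1 = (t ^+ 3 - 3%:R * t ^+ 2 + 1) / t ^+ 3.
  by field.
by rewrite t_inv_root mul0r.
Qed.

End F8.

Section SL2.

Local Open Scope group_scope.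
Local Open Scope ring_scope.

Lemma group_set_SL2 (F : finFieldType) : group_set (SL2 F).
Proof.
apply/group_setP; split; first by rewrite inE GL_1E det1.
by move=> g h; rewrite !inE GL_ME det_mulmx => /eqP -> /eqP ->; rewrite mulr1.
Qed.

Canonical SL2_group (F : finFieldType) := Group (group_set_SL2 F).

Lemma SL2_of_det1 (F : finFieldType) (A : 'M[F]_2) :
  \det A = 1%R -> exists2 g, g \in SL2 F & GLval g = A.
Proof.
move=> detA; have uA : A \in unitmx by rewrite unitmxE detA unitr1.
by exists (Sub A uA : {'GL_2[F]}); rewrite ?inE SubK ?detA.
Qed.

Lemma PSL2_order9 (F : finFieldType) (t : F) :
    t ^+ 3 - 3%:R * t + 1 = 0 -> 3%:R != 0 :> F ->
  exists2 s, s \in PSL2 F & #[s]%g = 9%N.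
Proof.
move=> t_root three_neq0.
have [m SLm mE] : exists2 m, m \in SL2 F & GLval m = mx2 0 (-1) 1 t.
  by apply: SL2_of_det1; rewrite det_mx2 mul0r sub0r mulN1r opprK.
have [u SLu uE] : exists2 u, u \in SL2 F & GLval u = mx2 1 1 0 1.
  by apply: SL2_of_det1; rewrite det_mx2 mul1r mulr0 subr0.
have Nm : m \in 'N('Z(SL2 F)).
  exact: subsetP (normal_norm (center_normal _)) m SLm.
exists (coset 'Z(SL2 F) m); first exact: mem_quotient.
apply: (@order_pfactor _ _ 3 1) => //; rewrite -morphX // ?expn1.
  have -> : (m ^+ 9)%g = 1%g.
    by apply: val_inj; change (GLval (m ^+ 9)%g = 1); rewrite GL_expE mE companion_expr9.
  by rewrite morph1.
apply: contra_neq (companion_expr3_not_commute t_root three_neq0).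
move/(coset_idr (groupX _ Nm))/centerP => [_ /(_ u SLu) /(congr1 GLval)].
by rewrite [GLval (_ * u)]GL_ME [GLval (u * _)]GL_ME GL_expE mE uE.
Qed.

End SL2.

Theorem lemma3p21 (F : finFieldType) (hF : #|F| = 8) :
  ~ exists H : {group {'GL_6['F_2]}},
      (H \isog setX (PSL2 F) (Zp 2))%g.
Proof.
case=> H /isog_symr/isogP[f injf _].
have [t t_root] := F8_cubic_root hF.
have three_neq0 : (3%:R != 0 :> F)%R.
  by rewrite -[3%N]/(2 + 1)%N natrD (pcharf0 (pchar2_F8 hF)) add0r oner_neq0.
have [s PSLs os] := PSL2_order9 t_root three_neq0.
have Gs1 : ((s, 1) \in setX (PSL2 F) (Zp 2))%g by rewrite inE PSLs group1.
have G1c : ((1, Zp1) \in setX (PSL2 F) (Zp 2))%g by rewrite !inE group1.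
apply: (@GL6_F2_order9_not_commute_involution (f (s, 1)%g) (f (1, Zp1)%g)).
- by rewrite order_injm // -[(s, 1)%g]/(pairg1 _ s) order_injm ?injm_pairg1 ?inE.
- rewrite order_injm // -[(1, Zp1)%g]/(pair1g _ Zp1) order_injm ?injm_pair1g ?inE //.
  exact: order_Zp1.
- rewrite /commute -!morphM //; congr (f _).
  by apply/eqP; rewrite xpair_eqE /= !mulg1 !mul1g !eqxx.
Qed.
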